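(* For any convex quadrilateral $\Delta\subset\mathbb R^2$ there is a unique pair $(\alpha,\beta)$ with $0\le\beta<1\le\alpha$ and $\alpha-\beta\ge1$ such that $\Delta$ is affinely equivalent to the convex hull of $(0,0),(1,0),(\alpha,1-\beta),(0,1)$. If $\Delta$ has no pair of parallel edges, then $\beta>0$ and $\alpha>1$, and $\Delta$ is affinely equivalent to the orthotoric quadrilateral $\sigma([1,\alpha]\times[0,\beta])$, where $\sigma(x,y)=(x+y,xy)$.
   Context: The pair $(\alpha,\beta)$ is called the characteristic pair of $\Delta$. *)

From Stdlib Require Import Reals.
Open Scope R_scope.

Definition pt := (R * R)%type.

Definition orient (a b c : pt) : R :=
  (fst b - fst a) * (snd c - snd a) - (snd b - snd a) * (fst c - fst a).

Definition cross_dir (a b c d : pt) : R :=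
  (fst b - fst a) * (snd d - snd c) - (snd b - snd a) * (fst d - fst c).

Definition conv4 (p0 p1 p2 p3 : pt) (x : pt) : Prop :=
  exists l0 l1 l2 l3 : R,
    0 <= l0 /\ 0 <= l1 /\ 0 <= l2 /\ 0 <= l3 /\ l0 + l1 + l2 + l3 = 1 /\
    fst x = l0 * fst p0 + l1 * fst p1 + l2 * fst p2 + l3 * fst p3 /\
    snd x = l0 * snd p0 + l1 * snd p1 + l2 * snd p2 + l3 * snd p3.

Definition vtx (v : nat -> pt) (i : nat) : pt := v (i mod 4)%nat.

Definition convex_quad (v : nat -> pt) : Prop :=
  (forall i : nat, (i < 4)%nat -> 0 < orient (vtx v i) (vtx v (i + 1)) (vtx v (i + 2))) \/
  (forall i : nat, (i < 4)%nat -> orient (vtx v i) (vtx v (i + 1)) (vtx v (i + 2)) < 0).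

Definition quad (v : nat -> pt) : pt -> Prop :=
  conv4 (vtx v 0) (vtx v 1) (vtx v 2) (vtx v 3).

Definition has_parallel_edges (v : nat -> pt) : Prop :=
  exists i j : nat, (i < 4)%nat /\ (j < 4)%nat /\ i <> j /\
    cross_dir (vtx v i) (vtx v (i + 1)) (vtx v j) (vtx v (j + 1)) = 0.

Definition aff_map (a b c d e f : R) (x : pt) : pt :=
  (a * fst x + b * snd x + e, c * fst x + d * snd x + f).

Definition aff_equiv (S T : pt -> Prop) : Prop :=
  exists a b c d e f : R, a * d - b * c <> 0 /\
    (forall x : pt, T x <-> exists y : pt, S y /\ x = aff_map a b c d e f y).

Definition char_quad (al be : R) : pt -> Prop :=
  conv4 (0, 0) (1, 0) (al, 1 - be) (0, 1).

Definition char_pair_ok (al be : R) : Prop :=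
  0 <= be /\ be < 1 /\ 1 <= al /\ al - be >= 1.

Definition sigma (x : pt) : pt := (fst x + snd x, fst x * snd x).

Definition orthotoric (al be : R) (z : pt) : Prop :=
  exists x y : R, 1 <= x <= al /\ 0 <= y <= be /\ z = sigma (x, y).

From Pilot Require Import Defs.
From Stdlib Require Import Reals Lra Psatz Lia.
Open Scope R_scope.

(* Label the vertices p0..p3 cyclically and let A_i be the
   (signed, doubled) area of the corner triangle at p_i; these four areas have
   one sign and A0 + A2 = A1 + A3.  The affine map sending p0, p1, p3 to
   (0,0), (1,0), (0,1) sends p2 to (1 + (A2 - A1)/A0, A1/A0) (normal_form).
   Choosing, among the eight dihedral relabellings, one where the smallest
   corner sits at p1 and |A1| <= |A0| <= |A2| makes this a characteristic
   quadrilateral, with be = 0 or al = 1 exactly when opposite edges are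
   parallel (has_char_pair_convex).

   An affine equivalence maps extreme points to extreme points,
   and the extreme points of the hull of four points are among those points;
   so an equivalence between two characteristic quadrilaterals permutes their
   vertices while preserving the affine relation that defines the third
   vertex, and the 24 permutations leave only the identity (char_pair_unique).

   Orthotoric model.  sigma (x, y) = (x + y, xy) maps the rectangle
   [1,al] x [0,be] onto the hull of the images of its corners, which is an
   affine image of the characteristic quadrilateral (char_quad_orthotoric). *)

Lemma orient_rev (a b c : pt) : orient c b a = - orient a b c.
Proof. unfold orient; ring. Qed.

Lemma conv4_intro (p0 p1 p2 p3 x : pt) (l0 l1 l2 l3 : R) :
  0 <= l0 -> 0 <= l1 -> 0 <= l2 -> 0 <= l3 -> l0 + l1 + l2 + l3 = 1 ->
  fst x = l0 * fst p0 + l1 * fst p1 + l2 * fst p2 + l3 * fst p3 ->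
  snd x = l0 * snd p0 + l1 * snd p1 + l2 * snd p2 + l3 * snd p3 ->
  conv4 p0 p1 p2 p3 x.
Proof. intros; exists l0, l1, l2, l3; tauto. Qed.

Lemma conv4_rot (p0 p1 p2 p3 x : pt) :
  conv4 p0 p1 p2 p3 x <-> conv4 p1 p2 p3 p0 x.
Proof.
  split; intros (l0 & l1 & l2 & l3 & H0 & H1 & H2 & H3 & Hs & Hx & Hy).
  - apply (conv4_intro _ _ _ _ _ l1 l2 l3 l0); lra.
  - apply (conv4_intro _ _ _ _ _ l3 l0 l1 l2); lra.
Qed.

Lemma conv4_refl (p0 p1 p2 p3 x : pt) :
  conv4 p0 p1 p2 p3 x <-> conv4 p0 p3 p2 p1 x.
Proof.
  split; intros (l0 & l1 & l2 & l3 & H0 & H1 & H2 & H3 & Hs & Hx & Hy);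
    apply (conv4_intro _ _ _ _ _ l0 l3 l2 l1); lra.
Qed.

Lemma conv4_aff (a b c d e f : R) (p0 p1 p2 p3 q0 q1 q2 q3 x : pt) :
  q0 = aff_map a b c d e f p0 -> q1 = aff_map a b c d e f p1 ->
  q2 = aff_map a b c d e f p2 -> q3 = aff_map a b c d e f p3 ->
  (conv4 q0 q1 q2 q3 x <->
   exists y, conv4 p0 p1 p2 p3 y /\ x = aff_map a b c d e f y).
Proof.
  intros -> -> -> ->. split.
  - intros (l0 & l1 & l2 & l3 & H0 & H1 & H2 & H3 & Hs & Hx & Hy).
    exists (l0 * fst p0 + l1 * fst p1 + l2 * fst p2 + l3 * fst p3,
            l0 * snd p0 + l1 * snd p1 + l2 * snd p2 + l3 * snd p3).
    split.
    + apply (conv4_intro _ _ _ _ _ l0 l1 l2 l3); simpl; lra.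
    + destruct x as [x1 x2]; unfold aff_map in *; simpl in *.
      replace l0 with (1 - l1 - l2 - l3) in * by lra.
      rewrite Hx, Hy; f_equal; ring.
  - intros (y & (l0 & l1 & l2 & l3 & H0 & H1 & H2 & H3 & Hs & Hx & Hy) & ->).
    apply (conv4_intro _ _ _ _ _ l0 l1 l2 l3); auto; unfold aff_map; simpl;
      rewrite Hx, Hy; replace l0 with (1 - l1 - l2 - l3) by lra; ring.
Qed.

Lemma aff_equiv_ext (S S' T T' : pt -> Prop) :
  (forall x, S x <-> S' x) -> (forall x, T x <-> T' x) ->
  aff_equiv S' T' -> aff_equiv S T.
Proof.
  intros HS HT (a & b & c & d & e & f & Hd & H). exists a, b, c, d, e, f; split; auto.
  intro x; rewrite HT, H; split; intros (y & Hy & ->); exists y; split; auto;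
    apply HS; auto.
Qed.

Lemma aff_equiv_trans (S T U : pt -> Prop) :
  aff_equiv S T -> aff_equiv T U -> aff_equiv S U.
Proof.
  intros (a & b & c & d & e & f & Hd & H) (a' & b' & c' & d' & e' & f' & Hd' & H').
  exists (a' * a + b' * c), (a' * b + b' * d), (c' * a + d' * c), (c' * b + d' * d),
         (a' * e + b' * f + e'), (c' * e + d' * f + f').
  split.
  - replace ((a' * a + b' * c) * (c' * b + d' * d) - (a' * b + b' * d) * (c' * a + d' * c))
      with ((a' * d' - b' * c') * (a * d - b * c)) by ring.
    apply Rmult_integral_contrapositive; auto.
  - intro x; rewrite H'; split.
    + intros (y & Hy & ->). apply H in Hy as (z & Hz & ->).
      exists z; split; auto. unfold aff_map; simpl; f_equal; ring.
    + intros (z & Hz & ->). exists (aff_map a b c d e f z); split.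
      * apply H; exists z; auto.
      * unfold aff_map; simpl; f_equal; ring.
Qed.

Lemma lin_inj (a b c d u w : R) :
  a * d - b * c <> 0 -> a * u + b * w = 0 -> c * u + d * w = 0 -> u = 0 /\ w = 0.
Proof.
  intros Hd H1 H2.
  assert (Fu : (a * d - b * c) * u = 0)
    by (replace ((a * d - b * c) * u) with (d * (a * u + b * w) - b * (c * u + d * w))
          by ring; rewrite H1, H2; ring).
  assert (Fw : (a * d - b * c) * w = 0)
    by (replace ((a * d - b * c) * w) with (a * (c * u + d * w) - c * (a * u + b * w))
          by ring; rewrite H1, H2; ring).
  apply Rmult_integral in Fu; apply Rmult_integral in Fw; tauto.
Qed.

Lemma aff_inj (a b c d e f : R) (x y : pt) :
  a * d - b * c <> 0 -> aff_map a b c d e f x = aff_map a b c d e f y -> x = y.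
Proof.
  intros Hd H. destruct x as [x1 x2], y as [y1 y2]; unfold aff_map in H; simpl in H.
  injection H; intros H2 H1.
  destruct (lin_inj a b c d (x1 - y1) (x2 - y2)) as [E1 E2]; auto; try lra.
  f_equal; lra.
Qed.

(* The inverse of x |-> M x + t is x |-> M^-1 x - M^-1 t. *)
Lemma aff_equiv_sym (S T : pt -> Prop) : aff_equiv S T -> aff_equiv T S.
Proof.
  intros (a & b & c & d & e & f & Hd & H).
  set (D := a * d - b * c).
  set (g := aff_map (d / D) (- b / D) (- c / D) (a / D)
              (- (d / D * e) - (- b / D) * f) (- (- c / D * e) - (a / D) * f)).
  assert (Hg : forall z, g (aff_map a b c d e f z) = z)
    by (intros [z1 z2]; unfold g, aff_map; simpl; f_equal; unfold D; field; auto).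
  assert (Hg' : forall z, aff_map a b c d e f (g z) = z)
    by (intros [z1 z2]; unfold g, aff_map; simpl; f_equal; unfold D; field; auto).
  exists (d / D), (- b / D), (- c / D), (a / D),
         (- (d / D * e) - (- b / D) * f), (- (- c / D * e) - (a / D) * f).
  split.
  - replace (d / D * (a / D) - - b / D * (- c / D)) with (/ D) by (unfold D; field; auto).
    apply Rinv_neq_0_compat; auto.
  - intro x; fold g; split.
    + intro Hx. exists (aff_map a b c d e f x); split; [apply H; exists x; auto|].
      rewrite Hg; auto.
    + intros (y & Hy & ->). apply H in Hy as (z & Hz & ->). rewrite Hg; auto.
Qed.

Lemma normal_form (p0 p1 p2 p3 : pt) : orient p0 p1 p3 <> 0 ->
  aff_equiv (conv4 p0 p1 p2 p3)
    (conv4 (0, 0) (1, 0)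
       (orient p0 p2 p3 / orient p0 p1 p3, orient p0 p1 p2 / orient p0 p1 p3) (0, 1)).
Proof.
  intro HD.
  destruct p0 as [x0 y0], p1 as [x1 y1], p2 as [x2 y2], p3 as [x3 y3].
  unfold orient in *; simpl in *.
  set (D := (x1 - x0) * (y3 - y0) - (y1 - y0) * (x3 - x0)) in *.
  set (a := (y3 - y0) / D). set (b := - (x3 - x0) / D).
  set (c := - (y1 - y0) / D). set (d := (x1 - x0) / D).
  exists a, b, c, d, (- (a * x0 + b * y0)), (- (c * x0 + d * y0)).
  split.
  - replace (a * d - b * c) with (/ D) by (unfold a, b, c, d, D in *; field; auto).
    apply Rinv_neq_0_compat; auto.
  - intro x. apply conv4_aff; unfold aff_map; simpl; f_equal;
      unfold a, b, c, d, D in *; field; auto.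
Qed.

Definition opposite_edges_parallel (p0 p1 p2 p3 : pt) : Prop :=
  cross_dir p0 p1 p2 p3 = 0 \/ cross_dir p1 p2 p3 p0 = 0.

Definition has_char_pair (p0 p1 p2 p3 : pt) : Prop :=
  exists al be, char_pair_ok al be /\ aff_equiv (conv4 p0 p1 p2 p3) (char_quad al be) /\
    (be = 0 \/ al = 1 -> opposite_edges_parallel p0 p1 p2 p3).

Lemma has_char_pair_rot (p0 p1 p2 p3 : pt) :
  has_char_pair p1 p2 p3 p0 -> has_char_pair p0 p1 p2 p3.
Proof.
  intros (al & be & Hok & He & Hpar). exists al, be; split; [exact Hok|split].
  - eapply aff_equiv_ext; [intro; apply conv4_rot | intro; reflexivity | exact He].
  - intro Hdeg; destruct (Hpar Hdeg) as [H | H]; [right | left];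
      unfold cross_dir in *; lra.
Qed.

Lemma has_char_pair_refl (p0 p1 p2 p3 : pt) :
  has_char_pair p0 p3 p2 p1 -> has_char_pair p0 p1 p2 p3.
Proof.
  intros (al & be & Hok & He & Hpar). exists al, be; split; [exact Hok|split].
  - eapply aff_equiv_ext; [intro; apply conv4_refl | intro; reflexivity | exact He].
  - intro Hdeg; destruct (Hpar Hdeg) as [H | H]; [right | left];
      unfold cross_dir in *; lra.
Qed.

(* Write A_i for the area of the corner triangle at p_i.  If A1 <= A0 <= A2 in
   absolute value (all with the same sign), the normal form is a characteristic
   quadrilateral with be = 1 - A1/A0 and al = 1 + (A2 - A1)/A0. *)
Lemma has_char_pair_of_corners (p0 p1 p2 p3 : pt) :
  0 < orient p0 p1 p2 * orient p3 p0 p1 ->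
  orient p0 p1 p2 * orient p3 p0 p1 <= orient p3 p0 p1 * orient p3 p0 p1 ->
  orient p3 p0 p1 * orient p3 p0 p1 <= orient p1 p2 p3 * orient p3 p0 p1 ->
  has_char_pair p0 p1 p2 p3.
Proof.
  intros H1 H10 H02.
  assert (E0 : orient p0 p1 p3 = orient p3 p0 p1) by (unfold orient; ring).
  assert (E3 : orient p0 p2 p3 = orient p3 p0 p1 + orient p1 p2 p3 - orient p0 p1 p2)
    by (unfold orient; ring).
  assert (C1 : cross_dir p0 p1 p2 p3 = orient p3 p0 p1 - orient p0 p1 p2)
    by (unfold orient, cross_dir; ring).
  assert (C2 : cross_dir p1 p2 p3 p0 = orient p3 p0 p1 - orient p0 p2 p3)
    by (unfold orient, cross_dir; ring).
  set (A0 := orient p3 p0 p1) in *. set (A1 := orient p0 p1 p2) in *.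
  set (A2 := orient p1 p2 p3) in *.
  assert (HA0 : A0 <> 0) by (intro Z; rewrite Z in H1; lra).
  set (r := A1 / A0). set (q := A2 / A0).
  assert (Hr : r * A0 = A1) by (unfold r; field; auto).
  assert (Hq : q * A0 = A2) by (unfold q; field; auto).
  assert (Hrq : 0 < r <= 1 /\ 1 <= q) by (repeat split; nra).
  exists (1 + q - r), (1 - r). split; [unfold char_pair_ok; lra | split].
  - eapply aff_equiv_ext; [intro; reflexivity | intro; unfold char_quad | ].
    + replace (1 + q - r, 1 - (1 - r))
        with (orient p0 p2 p3 / orient p0 p1 p3, orient p0 p1 p2 / orient p0 p1 p3).
      * reflexivity.
      * rewrite E0, E3; f_equal; unfold r, q, A1; field; auto.
    + apply normal_form; rewrite E0; auto.
  - intros [Hb | Ha]; [left; rewrite C1 | right; rewrite C2, E3]; nra.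
Qed.

Definition convex4 (p0 p1 p2 p3 : pt) : Prop :=
  (0 < orient p3 p0 p1 /\ 0 < orient p0 p1 p2 /\ 0 < orient p1 p2 p3 /\ 0 < orient p2 p3 p0) \/
  (orient p3 p0 p1 < 0 /\ orient p0 p1 p2 < 0 /\ orient p1 p2 p3 < 0 /\ orient p2 p3 p0 < 0).

(* Positively oriented case with A0 <= A2: relabel so that the smallest corner
   sits at position 1 and the largest opposite it. *)
Lemma has_char_pair_pos_half (p0 p1 p2 p3 : pt) :
  0 < orient p3 p0 p1 -> 0 < orient p0 p1 p2 -> 0 < orient p1 p2 p3 ->
  0 < orient p2 p3 p0 -> orient p3 p0 p1 <= orient p1 p2 p3 ->
  has_char_pair p0 p1 p2 p3.
Proof.
  intros H0 H1 H2 H3 H02.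
  destruct (Rle_or_lt (orient p0 p1 p2) (orient p3 p0 p1)) as [H10 | H01].
  { apply has_char_pair_of_corners; nra. }
  destruct (Rle_or_lt (orient p2 p3 p0) (orient p3 p0 p1)) as [H30 | H03].
  { apply has_char_pair_refl, has_char_pair_of_corners;
      rewrite ?(orient_rev p3 p0 p1), ?(orient_rev p2 p3 p0), ?(orient_rev p1 p2 p3); nra. }
  destruct (Rle_or_lt (orient p2 p3 p0) (orient p0 p1 p2)) as [H31 | H13].
  { do 3 apply has_char_pair_rot. apply has_char_pair_of_corners; nra. }
  apply has_char_pair_rot, has_char_pair_refl, has_char_pair_of_corners;
    rewrite ?(orient_rev p0 p1 p2), ?(orient_rev p3 p0 p1), ?(orient_rev p2 p3 p0); nra.
Qed.

(* Every convex labelling has a characteristic pair: reflect to make the corner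
   areas positive, then rotate by two if needed to get A0 <= A2. *)
Lemma has_char_pair_convex (p0 p1 p2 p3 : pt) :
  convex4 p0 p1 p2 p3 -> has_char_pair p0 p1 p2 p3.
Proof.
  assert (Hpos : forall q0 q1 q2 q3 : pt,
             0 < orient q3 q0 q1 -> 0 < orient q0 q1 q2 -> 0 < orient q1 q2 q3 ->
             0 < orient q2 q3 q0 -> has_char_pair q0 q1 q2 q3).
  { intros q0 q1 q2 q3 H0 H1 H2 H3.
    destruct (Rle_or_lt (orient q3 q0 q1) (orient q1 q2 q3)).
    - apply has_char_pair_pos_half; auto.
    - do 2 apply has_char_pair_rot. apply has_char_pair_pos_half; auto; lra. }
  intros [(H0 & H1 & H2 & H3) | (H0 & H1 & H2 & H3)]; [apply Hpos; auto|].
  apply has_char_pair_refl, Hpos;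
    rewrite ?(orient_rev p3 p0 p1), ?(orient_rev p2 p3 p0), ?(orient_rev p1 p2 p3),
      ?(orient_rev p0 p1 p2); lra.
Qed.

Definition extreme (S : pt -> Prop) (x : pt) : Prop :=
  S x /\ forall y z, S y -> S z ->
    fst x = (fst y + fst z) / 2 -> snd x = (snd y + snd z) / 2 -> y = z.

Lemma extreme_ext (S S' : pt -> Prop) (x : pt) :
  (forall y, S y <-> S' y) -> extreme S x -> extreme S' x.
Proof.
  intros HS [Hx Hm]; split; [apply HS; auto|].
  intros y z Hy Hz; apply Hm; apply HS; auto.
Qed.

Lemma extreme_aff (a b c d e f : R) (S T : pt -> Prop) (x : pt) :
  a * d - b * c <> 0 ->
  (forall x, T x <-> exists y, S y /\ x = aff_map a b c d e f y) ->
  extreme S x -> extreme T (aff_map a b c d e f x).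
Proof.
  intros Hd HT [Hx Hm]. split; [apply HT; exists x; auto|].
  intros y' z' Hy Hz E1 E2.
  apply HT in Hy as (y & Hy & ->). apply HT in Hz as (z & Hz & ->).
  f_equal. apply Hm; auto;
  destruct x as [x1 x2], y as [y1 y2], z as [z1 z2]; unfold aff_map in *; simpl in *;
  destruct (lin_inj a b c d (x1 - (y1 + z1) / 2) (x2 - (y2 + z2) / 2)) as [F1 F2];
    auto; lra.
Qed.

(* An extreme point giving positive weight l0 to p0 is p0: otherwise moving
   weight t*m between p0 and the other vertices (m = l1+l2+l3) exhibits it as
   the midpoint of two distinct points of the hull. *)
Lemma extreme_weight_pos (p0 p1 p2 p3 x : pt) (l0 l1 l2 l3 : R) :
  extreme (conv4 p0 p1 p2 p3) x ->
  0 < l0 -> 0 <= l1 -> 0 <= l2 -> 0 <= l3 -> l0 + l1 + l2 + l3 = 1 ->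
  fst x = l0 * fst p0 + l1 * fst p1 + l2 * fst p2 + l3 * fst p3 ->
  snd x = l0 * snd p0 + l1 * snd p1 + l2 * snd p2 + l3 * snd p3 ->
  x = p0.
Proof.
  intros [_ Hm] H0 H1 H2 H3 Hs Hx Hy.
  set (m := l1 + l2 + l3). set (t := Rmin 1 l0).
  assert (Ht : 0 < t /\ t <= 1 /\ t <= l0).
  { unfold t; split; [apply Rmin_glb_lt; lra | split; [apply Rmin_l | apply Rmin_r]]. }
  assert (Htm : t * m <= l0) by (unfold m; nra).
  set (shift := fun s : R =>
    ((l0 + s * m) * fst p0 + (l1 * (1 - s)) * fst p1 + (l2 * (1 - s)) * fst p2
       + (l3 * (1 - s)) * fst p3,
     (l0 + s * m) * snd p0 + (l1 * (1 - s)) * snd p1 + (l2 * (1 - s)) * snd p2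
       + (l3 * (1 - s)) * snd p3)).
  assert (E : shift t = shift (- t)).
  { apply Hm.
    - apply (conv4_intro _ _ _ _ _ (l0 + t * m) (l1 * (1 - t)) (l2 * (1 - t)) (l3 * (1 - t)));
        unfold shift, m in *; simpl; nra.
    - apply (conv4_intro _ _ _ _ _ (l0 + - t * m) (l1 * (1 - - t)) (l2 * (1 - - t))
               (l3 * (1 - - t))); unfold shift, m in *; simpl; nra.
    - unfold shift, m; simpl; rewrite Hx; field.
    - unfold shift, m; simpl; rewrite Hy; field. }
  unfold shift in E. injection E; intros E2 E1.
  assert (F1 : t * (m * fst p0 - (l1 * fst p1 + l2 * fst p2 + l3 * fst p3)) = 0)
    by (clear -E1; unfold m in *; lra).
  assert (F2 : t * (m * snd p0 - (l1 * snd p1 + l2 * snd p2 + l3 * snd p3)) = 0)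
    by (clear -E2; unfold m in *; lra).
  apply Rmult_integral in F1; apply Rmult_integral in F2.
  destruct F1 as [F1 | F1]; [lra|]. destruct F2 as [F2 | F2]; [lra|].
  destruct x as [x1 x2], p0 as [a1 a2]; simpl in *; f_equal; unfold m in *; nra.
Qed.

Lemma extreme_conv4 (p0 p1 p2 p3 x : pt) :
  extreme (conv4 p0 p1 p2 p3) x -> x = p0 \/ x = p1 \/ x = p2 \/ x = p3.
Proof.
  intro He. destruct (proj1 He) as (l0 & l1 & l2 & l3 & H0 & H1 & H2 & H3 & Hs & Hx & Hy).
  destruct (Rlt_or_le 0 l0) as [L0 | L0].
  { left. apply (extreme_weight_pos p0 p1 p2 p3 x l0 l1 l2 l3); auto. }
  destruct (Rlt_or_le 0 l1) as [L1 | L1].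
  { right; left. apply (extreme_weight_pos p1 p2 p3 p0 x l1 l2 l3 l0); try lra.
    apply (extreme_ext _ _ _ (conv4_rot p0 p1 p2 p3)); auto. }
  destruct (Rlt_or_le 0 l2) as [L2 | L2].
  { right; right; left. apply (extreme_weight_pos p2 p3 p0 p1 x l2 l3 l0 l1); try lra.
    apply (extreme_ext _ _ _ (fun y => iff_trans (conv4_rot p0 p1 p2 p3 y)
                                                 (conv4_rot p1 p2 p3 p0 y))); auto. }
  right; right; right. apply (extreme_weight_pos p3 p0 p1 p2 x l3 l0 l1 l2); try lra.
  apply (extreme_ext _ _ _ (fun y => iff_trans (conv4_rot p0 p1 p2 p3 y)
           (iff_trans (conv4_rot p1 p2 p3 p0 y) (conv4_rot p2 p3 p0 p1 y)))); auto.
Qed.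

(* A vertex at which some linear functional is strictly largest is extreme:
   every other point of the hull has a strictly smaller value, and a midpoint
   of two points of the hull has the average value. *)
Lemma exposed_extreme (p0 p1 p2 p3 : pt) (u w : R) :
  u * fst p1 + w * snd p1 < u * fst p0 + w * snd p0 ->
  u * fst p2 + w * snd p2 < u * fst p0 + w * snd p0 ->
  u * fst p3 + w * snd p3 < u * fst p0 + w * snd p0 ->
  extreme (conv4 p0 p1 p2 p3) p0.
Proof.
  intros G1 G2 G3.
  set (phi := fun q : pt => u * fst q + w * snd q) in *.
  change (phi p1 < phi p0) in G1. change (phi p2 < phi p0) in G2.
  change (phi p3 < phi p0) in G3.
  assert (Hbelow : forall y, conv4 p0 p1 p2 p3 y ->
             phi y <= phi p0 /\ (phi p0 <= phi y -> y = p0)).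
  { intros [y1 y2] (l0 & l1 & l2 & l3 & H0 & H1 & H2 & H3 & Hs & Hx & Hy).
    assert (Gap : phi p0 - phi (y1, y2) = l1 * (phi p0 - phi p1) + l2 * (phi p0 - phi p2)
                                        + l3 * (phi p0 - phi p3))
      by (unfold phi in *; simpl in *; rewrite Hx, Hy;
          replace l0 with (1 - l1 - l2 - l3) by lra; ring).
    assert (T1 : 0 <= l1 * (phi p0 - phi p1)) by (apply Rmult_le_pos; lra).
    assert (T2 : 0 <= l2 * (phi p0 - phi p2)) by (apply Rmult_le_pos; lra).
    assert (T3 : 0 <= l3 * (phi p0 - phi p3)) by (apply Rmult_le_pos; lra).
    split; [lra|].
    intro Hge. assert (l1 = 0 /\ l2 = 0 /\ l3 = 0) as (-> & -> & ->) by nra.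
    assert (l0 = 1) as -> by lra.
    destruct p0; simpl in *; f_equal; lra. }
  split; [apply (conv4_intro _ _ _ _ _ 1 0 0 0); lra|].
  intros y z Hy Hz M1 M2.
  destruct (Hbelow y Hy) as [By Ey], (Hbelow z Hz) as [Bz Ez].
  assert (Hmid : phi p0 = (phi y + phi z) / 2) by (unfold phi; rewrite M1, M2; field).
  rewrite Ey, Ez; auto; lra.
Qed.

Lemma char_quad_vertices_extreme (al be : R) : char_pair_ok al be ->
  extreme (char_quad al be) (0, 0) /\ extreme (char_quad al be) (1, 0) /\
  extreme (char_quad al be) (al, 1 - be) /\ extreme (char_quad al be) (0, 1).
Proof.
  intros (h1 & h2 & h3 & h4); unfold char_quad.
  split; [|split; [|split]].
  - apply (exposed_extreme _ _ _ _ (-1) (-1)); simpl; lra.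
  - apply (extreme_ext (conv4 (1, 0) (al, 1 - be) (0, 1) (0, 0)));
      [intro; symmetry; apply conv4_rot|].
    apply (exposed_extreme _ _ _ _ (1 - be) (- al)); simpl; nra.
  - apply (extreme_ext (conv4 (al, 1 - be) (0, 1) (0, 0) (1, 0)));
      [intro; rewrite (conv4_rot (0, 0)); symmetry; apply conv4_rot|].
    apply (exposed_extreme _ _ _ _ 1 1); simpl; lra.
  - apply (extreme_ext (conv4 (0, 1) (0, 0) (1, 0) (al, 1 - be)));
      [intro; rewrite (conv4_rot (0, 0)), (conv4_rot (1, 0)); symmetry; apply conv4_rot|].
    apply (exposed_extreme _ _ _ _ (- (1 - be)) al); simpl; nra.
Qed.

Definition char_vertex (al be : R) (q : pt) : Prop :=
  q = (0, 0) \/ q = (1, 0) \/ q = (al, 1 - be) \/ q = (0, 1).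

Lemma char_vertices_rigid (al be al' be' : R) (q0 q1 q2 q3 : pt) :
  char_pair_ok al be -> char_pair_ok al' be' ->
  char_vertex al' be' q0 -> char_vertex al' be' q1 ->
  char_vertex al' be' q2 -> char_vertex al' be' q3 ->
  q0 <> q1 -> q0 <> q2 -> q0 <> q3 -> q1 <> q2 -> q1 <> q3 -> q2 <> q3 ->
  fst q2 = fst q0 + al * (fst q1 - fst q0) + (1 - be) * (fst q3 - fst q0) ->
  snd q2 = snd q0 + al * (snd q1 - snd q0) + (1 - be) * (snd q3 - snd q0) ->
  al' = al /\ be' = be.
Proof.
  intros (h1 & h2 & h3 & h4) (k1 & k2 & k3 & k4) V0 V1 V2 V3 D01 D02 D03 D12 D13 D23 R1 R2.
  unfold char_vertex in *.
  repeat match goal with H : _ \/ _ |- _ => destruct H as [-> | H] end; subst;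
  try (exfalso; match goal with Hn : ?u <> ?u |- _ => apply Hn; reflexivity end);
  simpl in *; split; nra.
Qed.

(* Affinely equivalent characteristic quadrilaterals have the same pair: the
   equivalence maps the vertices of the first bijectively onto those of the
   second and preserves the affine relation among them. *)
Lemma char_pair_unique (al be al' be' : R) :
  char_pair_ok al be -> char_pair_ok al' be' ->
  aff_equiv (char_quad al be) (char_quad al' be') -> al' = al /\ be' = be.
Proof.
  intros Hok Hok' (a & b & c & d & e & f & Hd & H).
  set (g := aff_map a b c d e f).
  assert (Hvert : forall x, extreme (char_quad al be) x -> char_vertex al' be' (g x)).
  { intros x Hx. apply extreme_conv4. exact (extreme_aff _ _ _ _ _ _ _ _ _ Hd H Hx). }
  assert (Hdist : forall x y, x <> y -> g x <> g y)
    by (intros x y Hxy E; apply Hxy, (aff_inj a b c d e f); auto).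
  destruct (char_quad_vertices_extreme al be Hok) as (X0 & X1 & X2 & X3).
  pose proof Hok as (h1 & h2 & h3 & h4).
  apply (char_vertices_rigid al be al' be' (g (0, 0)) (g (1, 0)) (g (al, 1 - be)) (g (0, 1)));
    auto; try (apply Hdist; intro E; injection E; lra);
    unfold g, aff_map; simpl; ring.
Qed.

(* sigma maps the rectangle [1,al] x [0,be] onto the quadrilateral with
   vertices the images (1,0), (1+be,be), (al+be,al*be), (al,0) of its corners. *)
Definition ortho_vertices_hull (al be : R) : pt -> Prop :=
  conv4 (1, 0) (1 + be, be) (al + be, al * be) (al, 0).

(* sigma maps the line x = c (or y = c) into the line R = c (P - c); on the
   image point (P, R) = sigma (x, y) we have R - c (P - c) = (x - c) (y - c).
   The image of the rectangle is cut out by four such half-planes. *)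
Definition ortho_region (al be : R) (z : pt) : Prop :=
  0 <= snd z /\ al * (fst z - al) <= snd z /\
  snd z <= be * (fst z - be) /\ snd z <= fst z - 1.

(* Bilinear interpolation: sigma (x, y) is the barycentre of the four vertices
   with the product weights of (x - 1)/(al - 1) and y/be. *)
Lemma orthotoric_in_hull (al be : R) (z : pt) : 0 < be -> 1 < al ->
  orthotoric al be z -> ortho_vertices_hull al be z.
Proof.
  intros hb ha (x & y & [Hx1 Hx2] & [Hy1 Hy2] & ->).
  set (u := (x - 1) / (al - 1)). set (w := y / be).
  assert (Hu : u * (al - 1) = x - 1) by (unfold u; field; lra).
  assert (Hw : w * be = y) by (unfold w; field; lra).
  clearbody u w.
  assert (Hu1 : 0 <= u <= 1) by (split; nra).
  assert (Hw1 : 0 <= w <= 1) by (split; nra).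
  apply (conv4_intro _ _ _ _ _ ((1 - u) * (1 - w)) ((1 - u) * w) (u * w) (u * (1 - w)));
    simpl; nra.
Qed.

Lemma conv4_linear_le (p0 p1 p2 p3 z : pt) : conv4 p0 p1 p2 p3 z ->
  forall u w k : R, u * fst p0 + w * snd p0 <= k -> u * fst p1 + w * snd p1 <= k ->
  u * fst p2 + w * snd p2 <= k -> u * fst p3 + w * snd p3 <= k ->
  u * fst z + w * snd z <= k.
Proof.
  intros (l0 & l1 & l2 & l3 & H0 & H1 & H2 & H3 & Hs & Hx & Hy) u w k G0 G1 G2 G3.
  assert (E : u * fst z + w * snd z =
              l0 * (u * fst p0 + w * snd p0) + l1 * (u * fst p1 + w * snd p1)
              + l2 * (u * fst p2 + w * snd p2) + l3 * (u * fst p3 + w * snd p3))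
    by (rewrite Hx, Hy; ring).
  rewrite E.
  apply Rle_trans with (l0 * k + l1 * k + l2 * k + l3 * k); [|nra].
  repeat apply Rplus_le_compat; apply Rmult_le_compat_l; auto.
Qed.

Lemma hull_in_ortho_region (al be : R) (z : pt) : 0 < be -> be < 1 -> 1 < al ->
  ortho_vertices_hull al be z -> ortho_region al be z.
Proof.
  intros hb hb1 ha Hz.
  pose proof (conv4_linear_le _ _ _ _ _ Hz 0 (-1) 0
                ltac:(simpl; lra) ltac:(simpl; lra) ltac:(simpl; nra) ltac:(simpl; lra)).
  pose proof (conv4_linear_le _ _ _ _ _ Hz al (-1) (al * al)
                ltac:(simpl; nra) ltac:(simpl; nra) ltac:(simpl; nra) ltac:(simpl; nra)).
  pose proof (conv4_linear_le _ _ _ _ _ Hz (- be) 1 (- (be * be))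
                ltac:(simpl; nra) ltac:(simpl; nra) ltac:(simpl; nra) ltac:(simpl; nra)).
  pose proof (conv4_linear_le _ _ _ _ _ Hz (-1) 1 (-1)
                ltac:(simpl; lra) ltac:(simpl; lra) ltac:(simpl; nra) ltac:(simpl; lra)).
  unfold ortho_region; repeat split; lra.
Qed.

(* Conversely a point (P, R) of the region is sigma (x, y) for the roots
   x >= y of t^2 - P t + R: the four inequalities say (c - x) (c - y) has the
   sign placing 1 and be between the roots and 0 and al outside them. *)
Lemma ortho_region_in_orthotoric (al be : R) (z : pt) : 0 < be -> be < 1 -> 1 < al ->
  ortho_region al be z -> orthotoric al be z.
Proof.
  intros hb hb1 ha. destruct z as [P Q]. intros (I0 & Ial & Ibe & I1); simpl in *.
  assert (Hdisc : 0 <= P * P - 4 * Q)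
    by (pose proof (Rle_0_sqr (P - 2 * be)); unfold Rsqr in *; lra).
  set (s := sqrt (P * P - 4 * Q)).
  assert (Hs0 : 0 <= s) by apply sqrt_pos.
  assert (Hs2 : s * s = P * P - 4 * Q) by (apply sqrt_sqrt; auto).
  clearbody s.
  set (x := (P + s) / 2). set (y := (P - s) / 2).
  assert (Hroots : forall t, (t - x) * (t - y) = t * t - P * t + Q)
    by (intro; unfold x, y; nra).
  assert (Hyx : y <= x) by (unfold x, y; lra).
  pose proof (Hroots 0). pose proof (Hroots 1). pose proof (Hroots be). pose proof (Hroots al).
  assert (X1 : 1 <= x) by nra.
  assert (Ybe : y <= be) by nra.
  assert (Y0 : 0 <= y) by nra.
  assert (Xal : x <= al) by nra.
  exists x, y; split; [lra | split; [lra|]].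
  unfold Defs.sigma, x, y; simpl; f_equal; [field | nra].
Qed.

Lemma char_quad_orthotoric (al be : R) : 0 < be -> be < 1 -> 1 < al ->
  aff_equiv (char_quad al be) (orthotoric al be).
Proof.
  intros hb hb1 ha.
  exists be, (al - 1), be, 0, 1, 0. split; [nra|].
  intro z.
  assert (Hz : orthotoric al be z <-> ortho_vertices_hull al be z).
  { split; [apply orthotoric_in_hull; lra|].
    intro H; apply ortho_region_in_orthotoric, hull_in_ortho_region; auto. }
  rewrite Hz. apply conv4_aff; unfold aff_map; simpl; f_equal; ring.
Qed.

Lemma quad_conv4 (v : nat -> pt) (x : pt) :
  quad v x <-> conv4 (v 0%nat) (v 1%nat) (v 2%nat) (v 3%nat) x.
Proof. reflexivity. Qed.

Lemma convex_quad_convex4 (v : nat -> pt) :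
  convex_quad v -> convex4 (v 0%nat) (v 1%nat) (v 2%nat) (v 3%nat).
Proof.
  intros [Hv | Hv]; [left | right];
    pose proof (Hv 0%nat ltac:(lia)); pose proof (Hv 1%nat ltac:(lia));
    pose proof (Hv 2%nat ltac:(lia)); pose proof (Hv 3%nat ltac:(lia));
    unfold vtx in *; simpl in *; tauto.
Qed.

Lemma opposite_edges_parallel_has (v : nat -> pt) :
  opposite_edges_parallel (v 0%nat) (v 1%nat) (v 2%nat) (v 3%nat) -> has_parallel_edges v.
Proof.
  intros [H | H]; [exists 0%nat, 2%nat | exists 1%nat, 3%nat];
    repeat split; try lia; exact H.
Qed.

Theorem mainTheorem6 (v : nat -> pt) (Hv : convex_quad v) :
  (exists al be : R,
      (char_pair_ok al be /\ aff_equiv (quad v) (char_quad al be)) /\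
      (forall al' be' : R,
          char_pair_ok al' be' /\ aff_equiv (quad v) (char_quad al' be') ->
          al' = al /\ be' = be)) /\
  (~ has_parallel_edges v ->
   forall al be : R,
     char_pair_ok al be -> aff_equiv (quad v) (char_quad al be) ->
     0 < be /\ 1 < al /\ aff_equiv (quad v) (orthotoric al be)).
Proof.
  destruct (has_char_pair_convex _ _ _ _ (convex_quad_convex4 v Hv))
    as (al & be & Hok & He & Hdeg).
  assert (He' : aff_equiv (quad v) (char_quad al be))
    by (eapply aff_equiv_ext; [apply quad_conv4 | intro; reflexivity | exact He]).
  assert (Huniq : forall al' be', char_pair_ok al' be' /\ aff_equiv (quad v) (char_quad al' be') ->
                  al' = al /\ be' = be).
  { intros al' be' [Hok' He'']. apply char_pair_unique; auto.
    apply aff_equiv_trans with (quad v); auto. apply aff_equiv_sym; auto. }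
  split; [exists al, be; auto|].
  intros Hnp al0 be0 Hok0 He0. destruct (Huniq al0 be0 (conj Hok0 He0)) as [-> ->].
  destruct Hok as (h1 & h2 & h3 & h4).
  assert (Hnondeg : be <> 0 /\ al <> 1)
    by (split; intro E; apply Hnp, opposite_edges_parallel_has, Hdeg; auto).
  split; [lra | split; [lra|]].
  apply aff_equiv_trans with (char_quad al be); auto.
  apply char_quad_orthotoric; lra.
Qed.
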